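(* Let $(H,+,\circ)$ be a commutative multiplicative hyperring with identity, let $m\geq 1$, and let $P$ be a proper hyperideal of $H$. If $M_m(P)$ is an sdf-absorbing hyperideal of $M_m(H)$, then $P$ is an sdf-absorbing hyperideal of $H$.
   Context: A commutative multiplicative hyperring $(H,+,\circ)$ consists of an abelian group $(H,+)$ and an associative, commutative hyperoperation $\circ: H\times H\to P^*(H)$ with $x\circ(y+z)\subseteq x\circ y+x\circ z$ and $x\circ(-y)=-(x\circ y)=(-x)\circ y$. For subsets $A,B$, $A\circ B=\bigcup_{a\in A,b\in B}a\circ b$, $A\pm B=\{a\pm b\}$; $x^2=x\circ x$. Identity: $x\in x\circ 1$. A hyperideal is a nonempty $P$ with $x-y\in P$ and $r\circ x\subseteq P$ for $x,y\in P$, $r\in H$. $M_m(H)$ is the multiplicative hyperring of $m\times m$ matrices over $H$ with entrywise addition and hyperproduct $A\circ B=\{C: c_{ij}\in\sum_{k=1}^m a_{ik}\circ b_{kj}\}$; sets of matrices are compared entrywise. $M_m(P)$ is the set of matrices with all entries in $P$. A proper hyperideal $P$ (of $H$, or analogously of $M_m(H)$) is sdf-absorbing if whenever $x,y$ are nonzero elements and $x^2-y^2\subseteq P$, then $x-y\in P$ or $x+y\in P$. *)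

From mathcomp Require Import all_boot all_order all_algebra.
Set Implicit Arguments. Unset Strict Implicit. Unset Printing Implicit Defensive.
Import GRing.Theory.
Local Open Scope ring_scope.

Definition hset (T : Type) := T -> Prop.
Definition hsubset (T : Type) (A B : hset T) := forall x, A x -> B x.
Definition hseteq (T : Type) (A B : hset T) := forall x, A x <-> B x.
Definition hset1 (T : Type) (a : T) : hset T := fun x => x = a.

Definition hyperop (T : Type) := T -> T -> hset T.

Section HyperDefs.
Variable T : zmodType.
Variable hm : hyperop T.

Definition hsetmul (A B : hset T) : hset T :=
  fun z => exists a b, A a /\ B b /\ hm a b z.
Definition hsetadd (A B : hset T) : hset T :=
  fun z => exists a b, A a /\ B b /\ z = a + b.
Definition hsetsub (A B : hset T) : hset T :=
  fun z => exists a b, A a /\ B b /\ z = a - b.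
Definition hsetopp (A : hset T) : hset T := fun z => A (- z).

Definition comm_mult_hyperring : Prop :=
  [/\ (forall x y, exists z, hm x y z),
      (forall x y z, hseteq (hsetmul (hm x y) (hset1 z)) (hsetmul (hset1 x) (hm y z))),
      (forall x y, hseteq (hm x y) (hm y x)),
      (forall x y z, hsubset (hm x (y + z)) (hsetadd (hm x y) (hm x z))) &
      (forall x y, hseteq (hm x (- y)) (hsetopp (hm x y))
                   /\ hseteq (hm (- x) y) (hsetopp (hm x y)))].

Definition has_identity : Prop := exists one : T, forall x, hm x one x.

Definition hyperideal (P : hset T) : Prop :=
  [/\ (exists x, P x),
      (forall x y, P x -> P y -> P (x - y)) &
      (forall r x, P x -> hsubset (hm r x) P)].

Definition hproper (P : hset T) : Prop := exists x, ~ P x.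

Definition sdf_absorbing (P : hset T) : Prop :=
  [/\ hyperideal P, hproper P &
      forall x y, x <> 0 -> y <> 0 ->
        hsubset (hsetsub (hm x x) (hm y y)) P -> P (x - y) \/ P (x + y)].

End HyperDefs.

(* Matrix hyperproduct on M_m(H):
   A o B = { C : c_ij \in \sum_k a_ik o b_kj },
   where a finite sum of sets is { \sum_k s_k : s_k \in S_k }. *)
Definition hbigsum (T : zmodType) (m : nat) (S : 'I_m -> hset T) : hset T :=
  fun z => exists f : 'I_m -> T, (forall k, S k (f k)) /\ z = \sum_(k < m) f k.

Definition mx_hmul (T : zmodType) (hm : hyperop T) (m : nat) : hyperop 'M[T]_m :=
  fun A B C => forall i j, hbigsum (fun k => hm (A i k) (B k j)) (C i j).

Definition Mset (T : Type) (m : nat) (P : hset T) : hset 'M[T]_m :=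
  fun A => forall i j, P (A i j).

From mathcomp Require Import all_boot all_order all_algebra.
Set Implicit Arguments.
Unset Strict Implicit.
Unset Printing Implicit Defensive.
Import GRing.Theory.
Local Open Scope ring_scope.

(* Send x to the constant matrix with all entries x.  Each entry of a product
   of constant matrices is a sum of m elements of x o y, so an entry of a
   difference of two such products is a sum of elements of x1 o x2 - y1 o y2;
   closure of P under sums puts it in P.  Hence the sdf hypothesis for P at
   (x, y) gives the one for M_m(P) at the constant matrices, and the
   conclusion for M_m(P) is read back on one entry. *)

Section HyperidealSums.
Variables (H : zmodType) (hm : hyperop H) (P : hset H).
Hypothesis idealP : hyperideal hm P.

Lemma hyperideal0 : P 0.
Proof. by case: idealP => -[a Pa] subP _; rewrite -(subrr a); apply: subP. Qed.

Lemma hyperidealD x y : P x -> P y -> P (x + y).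
Proof.
case: idealP => _ subP _ Px Py.
have -> : x + y = x - (0 - y) by rewrite sub0r opprK.
exact: subP Px (subP _ _ hyperideal0 Py).
Qed.

Lemma hyperideal_sum n (F : 'I_n -> H) : (forall k, P (F k)) -> P (\sum_(k < n) F k).
Proof. by move=> PF; apply: (big_ind P) => //; [apply: hyperideal0 | apply: hyperidealD]. Qed.

Lemma hsetsub_mx_hmul_const_Mset (m : nat) (x1 x2 y1 y2 : H) :
  hsubset (hsetsub (hm x1 x2) (hm y1 y2)) P ->
  hsubset (hsetsub (@mx_hmul H hm m (const_mx x1) (const_mx x2))
                   (mx_hmul hm (const_mx y1) (const_mx y2)))
          (Mset P).
Proof.
move=> subP _ [C [D [prodC [prodD ->]]]] i j; rewrite !mxE.
have [f [fx ->]] := prodC i j; have [g [gy ->]] := prodD i j.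
rewrite -sumrB; apply: hyperideal_sum => k; apply: subP.
by exists (f k), (g k); move: (fx k) (gy k); rewrite !mxE.
Qed.

End HyperidealSums.

Section ConstantMatrices.
Variables (H : zmodType) (m : nat).
Hypothesis m_gt0 : (0 < m)%N.

Lemma const_mx_eq0 (x : H) : (const_mx x : 'M_m) = 0 -> x = 0.
Proof. by move/matrixP/(_ (Ordinal m_gt0) (Ordinal m_gt0)); rewrite !mxE. Qed.

Lemma Mset_const_mx (P : hset H) (x : H) : Mset P (const_mx x : 'M_m) -> P x.
Proof. by move/(_ (Ordinal m_gt0) (Ordinal m_gt0)); rewrite mxE. Qed.

End ConstantMatrices.

Theorem mainTheorem12 (H : zmodType) (hm : hyperop H) (m : nat) (P : hset H) :
  comm_mult_hyperring hm -> has_identity hm -> (0 < m)%N ->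
  hyperideal hm P -> hproper P ->
  sdf_absorbing (@mx_hmul H hm m) (@Mset H m P) ->
  sdf_absorbing hm P.
Proof.
move=> _ _ m_gt0 idealP properP [_ _ sdfM]; split => // x y x_neq0 y_neq0 subP.
have cx_neq0 : (const_mx x : 'M_m) <> 0 by move/(const_mx_eq0 m_gt0).
have cy_neq0 : (const_mx y : 'M_m) <> 0 by move/(const_mx_eq0 m_gt0).
have := sdfM _ _ cx_neq0 cy_neq0 (hsetsub_mx_hmul_const_Mset idealP subP).
rewrite -!(raddfB, raddfD) /=.
by case=> /(Mset_const_mx m_gt0); [left | right].
Qed.
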